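(* Let $A$ be a central simple algebra of degree $n$ over a field $k$, and let $I\subset A$ be a left ideal of $k$-dimension $n$. Fix an integer $j$. Then the map $J\mapsto J^\circ I$ is a canonical bijection from the set of left ideals $J$ of $A$ with $I\subset J$ and $\dim_k J=nj$ onto the set of $k$-subspaces $W\subset I^\circ I$ with $\dim_k W=n-j$. (Its inverse is $W\mapsto{}^\circ(WA)$.)
   Context: For $I\subset A$: right annihilator $I^\circ=\{a\in A: Ia=0\}$, left annihilator ${}^\circ I=\{a\in A: aI=0\}$. Products of subspaces $UW$ denote the $k$-span of products $uw$. *)

From HB Require Import structures.
From mathcomp Require Import all_boot all_order all_algebra.
From mathcomp Require Import falgebra.
Set Implicit Arguments. Unset Strict Implicit. Unset Printing Implicit Defensive.
Import GRing.Theory.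
Local Open Scope ring_scope.
Local Open Scope vspace_scope.

Section Defs.
Variables (k : fieldType) (A : falgType k).

(* right annihilator I° = {a | I a = 0} : intersection over a basis of I
   of the kernels of v |-> b * v *)
Definition rann (I : {vspace A}) : {vspace A} :=
  (\bigcap_i lker (amull (tnth (vbasis I) i)))%VS.

(* left annihilator °I = {a | a I = 0} *)
Definition lann (I : {vspace A}) : {vspace A} :=
  (\bigcap_i lker (amulr (tnth (vbasis I) i)))%VS.

Definition left_ideal (J : {vspace A}) : bool := (fullv * J <= J)%VS.

Definition two_sided_ideal (J : {vspace A}) : bool :=
  (fullv * J <= J)%VS && (J * fullv <= J)%VS.

Definition central_simple_of_degree (n : nat) : Prop :=
  [/\ ('Z(fullv : {vspace A}) = 1)%VS,
      (forall J : {vspace A}, two_sided_ideal J -> J = 0%VS \/ J = fullv)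
    & \dim (fullv : {vspace A}) = (n ^ 2)%N].

End Defs.

(* Since [lann I] is a two-sided ideal not containing [1], it is [0]; counting
   linear conditions then gives [\dim (lann W) = n ^ 2 - n * \dim W] for every
   subspace [W] of [I].  A greedy argument shows that every left ideal [J]
   contains some [b] whose kernel on [I] is exactly [U := rann J :&: I], so that
   [A b <= J <= lann U] all have dimension [n * (n - \dim U)]: hence
   [J = lann (rann J :&: I)].  As [x I <= <[x]>] for [x] in [I], the ideal [I]
   has a right unit, so [rann J * I = rann J :&: I].  The correspondence is thus
   [J |-> rann J :&: I] and [W |-> lann W], and the dimension formula matches
   [\dim J = n * j] with [\dim W = n - j]. *)

From HB Require Import structures.
From mathcomp Require Import all_boot all_order all_algebra.
From mathcomp Require Import falgebra.
From mathcomp Require Import zify.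

Set Implicit Arguments.
Unset Strict Implicit.
Unset Printing Implicit Defensive.
Import GRing.Theory.
Local Open Scope ring_scope.

Section Annihilators.
Variables (k : fieldType) (A : falgType k).
Implicit Types (X Y W J : {vspace A}) (x y : A).

Lemma bigcap_lkerP (f : {linear A -> 'End(A)}) X x :
  reflect (forall y, y \in X -> f y x = 0)
          (x \in \bigcap_i lker (f (tnth (vbasis X) i)))%VS.
Proof.
apply: (iffP subv_bigcapP) => [fx0 y /coord_vbasis-> | fX0 i _].
  rewrite linear_sum sum_lfunE big1 // => i _; rewrite linearZ scale_lfunE /=.
  have := fx0 i isT; rewrite -memvE memv_ker -tnth_nth => /eqP->.
  by rewrite scaler0.
by rewrite -memvE memv_ker fX0 ?vbasis_mem ?mem_tnth.
Qed.

Lemma bigcap_lkerPn (f : {linear A -> 'End(A)}) X x :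
  reflect (exists2 y, y \in X & f y x != 0)
          (x \notin \bigcap_i lker (f (tnth (vbasis X) i)))%VS.
Proof.
apply: (iffP idP) => [xNX | [y Xy]]; last by apply: contra => /bigcap_lkerP->.
have /hasP[y /vbasis_mem Xy fyx] : has (fun y => f y x != 0) (vbasis X).
  apply: contraR xNX => /hasPn fX0; apply/subv_bigcapP => i _.
  by rewrite -memvE memv_ker; apply/negPn/fX0/mem_tnth.
by exists y.
Qed.

Lemma lannP X x : reflect (forall y, y \in X -> x * y = 0) (x \in lann X).
Proof. by apply: (iffP (bigcap_lkerP _ _ _)) => xX0 y /xX0; rewrite lfunE. Qed.

Lemma lannPn X x : reflect (exists2 y, y \in X & x * y != 0) (x \notin lann X).
Proof.
by apply: (iffP (bigcap_lkerPn _ _ _)) => -[y Xy xy]; exists y; rewrite ?lfunE in xy *.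
Qed.

Lemma rannP X x : reflect (forall y, y \in X -> y * x = 0) (x \in rann X).
Proof. by apply: (iffP (bigcap_lkerP _ _ _)) => Xx0 y /Xx0; rewrite lfunE. Qed.

Lemma rannPn X x : reflect (exists2 y, y \in X & y * x != 0) (x \notin rann X).
Proof.
by apply: (iffP (bigcap_lkerPn _ _ _)) => -[y Xy xy]; exists y; rewrite ?lfunE in xy *.
Qed.

Lemma sub_lann X Y : (X <= lann Y)%VS = (Y <= rann X)%VS.
Proof.
apply/subvP/subvP => [XY y Yy | YX x Xx]; [apply/rannP | apply/lannP].
  by move=> x /XY/lannP->.
by move=> y /YX/rannP->.
Qed.

Lemma rannS X Y : (X <= Y)%VS -> (rann Y <= rann X)%VS.
Proof. by move=> XY; rewrite -sub_lann (subv_trans XY) // sub_lann. Qed.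

Lemma lannS X Y : (X <= Y)%VS -> (lann Y <= lann X)%VS.
Proof. by move=> XY; rewrite sub_lann (subv_trans XY) // -sub_lann. Qed.

Lemma left_idealP J : reflect (forall a x, x \in J -> a * x \in J) (left_ideal J).
Proof.
apply: (iffP prodvP) => [JL a x Jx | JL a x _ Jx]; last exact: JL.
exact: JL (memvf a) Jx.
Qed.

Lemma lann_left_ideal X : left_ideal (lann X).
Proof.
apply/left_idealP => a x /lannP xX0; apply/lannP => y Xy.
by rewrite -mulrA xX0 ?mulr0.
Qed.

Lemma lann_prodvf X : lann (X * fullv)%VS = lann X.
Proof.
apply/vspaceP => x; apply/lannP/lannP => xX0 y Xy.
  by apply: xX0; rewrite -[y]mulr1 memv_mul ?memvf.
have /subvP/(_ y Xy) : (X * fullv <= lker (amull x))%VS.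
  by apply/prodvP => u v Xu _; rewrite memv_ker lfunE /= mulrA xX0 ?mul0r.
by rewrite memv_ker lfunE => /eqP.
Qed.

Lemma lannD X Y : lann (X + Y)%VS = (lann X :&: lann Y)%VS.
Proof.
apply/eqP; rewrite eqEsubv subv_cap !lannS ?addvSl ?addvSr //=.
apply/subvP => x /memv_capP[/lannP xX0 /lannP xY0].
apply/lannP => _ /memv_addP[u Xu [v Yv ->]].
by rewrite mulrDr xX0 ?xY0 ?addr0.
Qed.

Lemma lann0 : lann (0%VS : {vspace A}) = fullv.
Proof.
apply/vspaceP => x; rewrite memvf; apply/lannP => y.
by rewrite memv0 => /eqP->; rewrite mulr0.
Qed.

Lemma lann_line x : lann <[x]>%VS = lker (amulr x).
Proof.
apply/vspaceP => a; rewrite memv_ker lfunE /=.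
apply/lannP/eqP => [ax0 | ax0 _ /vlineP[c ->]]; first by rewrite ax0 ?memv_line.
by rewrite -scalerAr ax0 scaler0.
Qed.

End Annihilators.

Section MinimalLeftIdeal.
Variables (k : fieldType) (A : falgType k) (n : nat) (I : {vspace A}).
Hypothesis A_simple : forall J : {vspace A}, two_sided_ideal J -> J = 0%VS \/ J = fullv.
Hypothesis dimA : \dim {:A} = (n ^ 2)%N.
Hypothesis I_left : left_ideal I.
Hypothesis dimI : \dim I = n.
Implicit Types (W J : {vspace A}) (a b c x y z : A).

Lemma deg_gt0 : (0 < n)%N.
Proof. by have := FalgType_proper A; rewrite -dimvf dimA; case: n. Qed.

Lemma mulr_memI a x : x \in I -> a * x \in I.
Proof. by move/left_idealP: I_left; apply. Qed.

Lemma limg_amulr_subI U x : x \in I -> (amulr x @: U <= I)%VS.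
Proof. by move=> Ix; apply/subvP => _ /memv_imgP[u _ ->]; rewrite lfunE mulr_memI. Qed.

Lemma lannI_eq0 : lann I = 0%VS.
Proof.
have lannI_ideal : two_sided_ideal (lann I).
  apply/andP; split; first exact: lann_left_ideal.
  apply/prodvP => u v /lannP uI0 _; apply/lannP => y Iy.
  by rewrite -mulrA uI0 // mulr_memI.
have [//|lannI_full] := A_simple lannI_ideal.
suff I0 : I = 0%VS by have := deg_gt0; rewrite -dimI I0 dimv0.
apply/vspaceP => y; rewrite memv0; apply/idP/eqP => [Iy | ->]; last exact: mem0v.
have /lannP/(_ y Iy) : 1 \in lann I by rewrite lannI_full memvf.
by rewrite mul1r.
Qed.

Lemma lann_diff_capI W : (W <= I)%VS -> (lann W :&: lann (I :\: W))%VS = 0%VS.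
Proof. by move=> WI; rewrite -lannD addvC addv_diff (addv_idPl WI) lannI_eq0. Qed.

(* Each [x] in [s] imposes [a * x = 0], i.e. at most [n] conditions as [a * x] is in [I]. *)
Lemma dim_lann_span (s : seq A) : all (mem I) s ->
  (n ^ 2 <= \dim (lann <<s>>%VS) + n * size s)%N.
Proof.
elim: s => [|x s IHs] /=; first by rewrite span_nil lann0 dimA muln0 addn0.
case/andP => Ix /IHs{}IHs; rewrite span_cons lannD lann_line mulnS.
have := dimv_sum_cap (lker (amulr x)) (lann <<s>>).
have : (\dim (lker (amulr x) + lann <<s>>) <= n ^ 2)%N by rewrite -dimA dimvS ?subvf.
have := limg_ker_dim (amulr x) fullv; rewrite capfv dimA.
have := dimvS (limg_amulr_subI fullv Ix); rewrite dimI.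
lia.
Qed.

Lemma dim_lann W : (W <= I)%VS -> (\dim (lann W) + n * \dim W = n ^ 2)%N.
Proof.
have dim_lann_lb V : (V <= I)%VS -> (n ^ 2 <= \dim (lann V) + n * \dim V)%N.
  move=> VI; have := @dim_lann_span (vbasis V).
  rewrite (span_basis (vbasisP V)) size_tuple; apply.
  by apply/allP => x /vbasis_mem; apply: (subvP VI).
move=> WI; have := dim_lann_lb _ WI; have := dim_lann_lb _ (diffvSl I W).
have := dimv_sum_cap (lann W) (lann (I :\: W)); rewrite lann_diff_capI // dimv0.
have : (\dim (lann W + lann (I :\: W)) <= n ^ 2)%N by rewrite -dimA dimvS ?subvf.
have := dimv_cap_compl I W; rewrite (capv_idPr WI) dimI.
nia.
Qed.

Lemma prodfv_line x : x \in I -> x != 0 -> (fullv * <[x]>)%VS = I.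
Proof.
move=> Ix x0; have := limg_ker_dim (amulr x) fullv.
have := @dim_lann <[x]>; rewrite -memvE Ix lann_line dim_vline x0 capfv dimA.
move=> /(_ isT) dim_ker dim_ker_img; have dim_img : \dim (amulr x @: fullv) = n by lia.
by rewrite -limg_amulr; apply/eqP; rewrite eqEdim limg_amulr_subI //= dim_img dimI.
Qed.

(* With [I = W + <[x]>], some [p] kills [W] and fixes [x]; then [x * y = p * (x * y)]
   only sees the [<[x]>]-component of [x * y]. *)
Lemma mulI_line x y : x \in I -> y \in I -> x * y \in <[x]>%VS.
Proof.
move=> Ix Iy; have [->|x0] := eqVneq x 0; first by rewrite mul0r mem0v.
set W := (I :\: <[x]>)%VS.
have xI : (<[x]> <= I)%VS by rewrite -memvE.
have IxW : (W + <[x]>)%VS = I by rewrite addv_diff (addv_idPl xI).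
have dim_lannW : \dim (lann W) = n.
  have := dim_lann (diffvSl I <[x]>); have := dimv_cap_compl I <[x]>.
  rewrite (capv_idPr xI) dim_vline x0 dimI -/W; nia.
have onto : (amulr x @: lann W)%VS = I.
  apply/eqP; rewrite eqEdim limg_amulr_subI //= limg_dim_eq ?dim_lannW ?dimI //.
  by rewrite -lann_line capvC lann_diff_capI.
have /memv_imgP[p /lannP pW0 px] : x \in (amulr x @: lann W)%VS by rewrite onto.
rewrite lfunE /= in px.
have /memv_addP[w Ww [u /vlineP[c ->] xy]] : x * y \in (W + <[x]>)%VS.
  by rewrite IxW mulr_memI.
by rewrite [in x * y]px -mulrA xy mulrDr pW0 // add0r -scalerAr -px memvZ ?memv_line.
Qed.

Lemma right_unitI : exists2 e, e \in I & forall x, x \in I -> x * e = x.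
Proof.
have [x0 Ix0 x0_neq0] : exists2 x0, x0 \in I & x0 != 0.
  exists (vpick I); rewrite ?memv_pick // vpick0 -dimv_eq0 dimI -lt0n.
  exact: deg_gt0.
have /lannPn[y Iy x0y_neq0] : x0 \notin lann I by rewrite lannI_eq0 memv0.
have /vlineP[c x0y] := mulI_line Ix0 Iy.
have c_neq0 : c != 0 by apply: contraNneq x0y_neq0 => c0; rewrite x0y c0 scale0r.
exists (c^-1 *: y); first exact: memvZ.
move=> x; rewrite -(prodfv_line Ix0 x0_neq0) => /memv_cosetP[a _ ->].
by rewrite -mulrA -scalerAr x0y scalerA mulVf // scale1r.
Qed.

Lemma prod_rannI J : (rann J * I)%VS = (rann J :&: I)%VS.
Proof.
have [e Ie eK] := right_unitI.
apply/eqP; rewrite eqEsubv; apply/andP; split.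
  apply/prodvP => r x /rannP Jr0 Ix; rewrite memv_cap mulr_memI // andbT.
  by apply/rannP => y Jy; rewrite mulrA Jr0 ?mul0r.
by apply/subvP => x /memv_capP[Jx Ix]; rewrite -(eK x Ix) memv_mul.
Qed.

Definition kerI b := (lker (amull b) :&: I)%VS.

(* For [v] in [I], [z * (c * v)] lies on [<[z]>], which meets [b I] only in [0]. *)
Lemma kerI_addr_mul b c z :
  z \in I -> z \notin (amull b @: I)%VS -> (kerI (b + z * c)%R <= kerI b)%VS.
Proof.
move=> Iz zNbI; apply/subvP => v /memv_capP[]; rewrite memv_ker !lfunE /=.
move=> bzcv0 Iv; rewrite memv_cap memv_ker lfunE Iv andbT /=.
have /vlineP[d zcv] := mulI_line Iz (mulr_memI c Iv).
have bv : b * v = - (d *: z).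
  by apply/eqP; rewrite -addr_eq0 -zcv mulrA -mulrDl.
have [d0 | d_neq0] := eqVneq d 0; first by rewrite bv d0 scale0r oppr0.
have : b * v \in (amull b @: I)%VS by have := memv_img (amull b) Iv; rewrite lfunE.
rewrite bv memvN => /(memvZ d^-1); rewrite scalerA mulVf // scale1r => zbI.
by rewrite zbI in zNbI.
Qed.

(* The smaller kernel is that of [b + z * (d * b')], with [z] outside [b I] and [d] chosen
   so that it no longer kills a witness [x] of [kerI b != rann J :&: I]. *)
Lemma kerI_shrink J b : left_ideal J -> b \in J -> kerI b != (rann J :&: I)%VS ->
  exists2 b', b' \in J & (\dim (kerI b') < \dim (kerI b))%N.
Proof.
move=> /left_idealP JL Jb; have JI_sub_Kb : (rann J :&: I <= kerI b)%VS.
  apply/subvP => x /memv_capP[/rannP Jx0 Ix].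
  by rewrite memv_cap memv_ker lfunE /= Jx0 ?eqxx.
rewrite eqEsubv JI_sub_Kb andbT => /subvPn[x Kx].
have /memv_capP[] := Kx; rewrite memv_ker lfunE /= => /eqP bx0 Ix.
rewrite memv_cap Ix andbT => /rannPn[b' Jb' b'x_neq0].
have Ib'x : b' * x \in I by exact: mulr_memI.
have x_neq0 : x != 0 by apply: contraNneq b'x_neq0 => ->; rewrite mulr0.
have dim_bI : (\dim (amull b @: I) < n)%N.
  have : (0 < \dim (kerI b))%N.
    by rewrite lt0n dimv_eq0; apply: contraTneq Kx => ->; rewrite memv0.
  have := limg_ker_dim (amull b) I; rewrite capvC -/(kerI b) dimI; lia.
have [z Iz zNbI] : exists2 z, z \in I & z \notin (amull b @: I)%VS.
  by apply/subvPn/negP => /dimvS; rewrite dimI; lia.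
have [y Iy zy_neq0] : exists2 y, y \in I & z * y != 0.
  by apply/lannPn; rewrite lannI_eq0 memv0; apply: contraNneq zNbI => ->; apply: mem0v.
have [d _ y_def] : exists2 d, d \in fullv & y = d * (b' * x).
  by apply/memv_cosetP; rewrite prodfv_line.
exists (b + z * (d * b')); first by rewrite memvD // mulrA JL.
have xNK : x \notin kerI (b + z * (d * b')).
  by rewrite memv_cap memv_ker lfunE /= Ix andbT mulrDl bx0 add0r -!mulrA -y_def.
rewrite ltnNge; apply: contra xNK => le_dim.
have /eqP-> // : kerI (b + z * (d * b')) == kerI b.
by rewrite eqEdim kerI_addr_mul.
Qed.

Lemma kerI_rann J : left_ideal J -> exists2 b, b \in J & kerI b = (rann J :&: I)%VS.
Proof.
move=> JL; suff kerI_lt m b : b \in J -> (\dim (kerI b) < m)%N ->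
    exists2 b0, b0 \in J & kerI b0 = (rann J :&: I)%VS.
  exact: (kerI_lt _ _ (mem0v J) (ltnSn _)).
elim: m b => // m IHm b Jb lt_m.
have [Kb | /(kerI_shrink JL Jb)[b' Jb' lt_b]] := eqVneq (kerI b) (rann J :&: I)%VS.
  by exists b.
by apply: IHm Jb' _; apply: leq_trans lt_b _; rewrite -ltnS.
Qed.

Lemma lker_amulr_lann b : lker (amulr b) = lann (amull b @: I)%VS.
Proof.
apply/vspaceP => a; rewrite memv_ker lfunE /=.
apply/eqP/lannP => [ab0 _ /memv_imgP[x _ ->] | abI0].
  by rewrite lfunE /= mulrA ab0 mul0r.
apply/eqP; rewrite -memv0 -lannI_eq0; apply/lannP => x Ix; rewrite -mulrA abI0 //.
by have := memv_img (amull b) Ix; rewrite lfunE.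
Qed.

Lemma left_ideal_lann J : left_ideal J -> lann (rann J :&: I)%VS = J.
Proof.
move=> JL; have [b Jb Kb] := kerI_rann JL.
set U := (rann J :&: I)%VS in Kb *; set bI := (amull b @: I)%VS.
have U_sub_I : (U <= I)%VS by apply: capvSr.
have bI_sub_I : (bI <= I)%VS.
  by apply/subvP => _ /memv_imgP[x Ix ->]; rewrite lfunE mulr_memI.
have Ab_sub_J : (amulr b @: fullv <= J)%VS.
  by apply/subvP => _ /memv_imgP[a _ ->]; rewrite lfunE (left_idealP _ JL).
have J_sub_lannU : (J <= lann U)%VS by rewrite sub_lann capvSl.
have := limg_ker_dim (amull b) I; rewrite capvC -/(kerI b) Kb dimI -/bI.
have := limg_ker_dim (amulr b) fullv; rewrite capfv lker_amulr_lann -/bI dimA.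
have := dim_lann bI_sub_I; have := dim_lann U_sub_I; have := dimvS Ab_sub_J.
move=> le_Ab_J dim_lannU dim_lannbI dim_Ab dim_bI.
apply/eqP; rewrite eq_sym eqEdim J_sub_lannU /=; nia.
Qed.

Lemma rann_lann_capI W : (W <= I)%VS -> (rann (lann W) :&: I)%VS = W.
Proof.
move=> WI; have := dim_lann (capvSr (rann (lann W)) I).
rewrite left_ideal_lann ?lann_left_ideal //; have := dim_lann WI.
move=> dim_lannW dim_lannU; have n_gt0 := deg_gt0.
have W_sub_U : (W <= rann (lann W) :&: I)%VS by rewrite subv_cap -sub_lann subvv.
by apply/eqP; rewrite eq_sym eqEdim W_sub_U /=; nia.
Qed.

Lemma dim_rann_capI J (j : int) : left_ideal J -> (\dim J)%:Z = n%:Z * j ->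
  (\dim (rann J :&: I))%:Z = n%:Z - j.
Proof.
move=> JL; have := dim_lann (capvSr (rann J) I); rewrite left_ideal_lann //.
have := deg_gt0; nia.
Qed.

Lemma dim_lannI_eq0 W (j : int) : (W <= I)%VS -> (\dim W)%:Z = n%:Z - j ->
  (\dim (lann W))%:Z = n%:Z * j.
Proof. by move=> /dim_lann; nia. Qed.

End MinimalLeftIdeal.

Theorem proposition4p14 (k : fieldType) (A : falgType k) (n : nat)
  (I : {vspace A}) (j : int) :
  central_simple_of_degree A n ->
  left_ideal I -> \dim I = n ->
  let dom := fun J : {vspace A} =>
    [/\ left_ideal J, (I <= J)%VS & (\dim J)%:Z = n%:Z * j] in
  let cod := fun W : {vspace A} =>
    (W <= rann I * I)%VS /\ (\dim W)%:Z = n%:Z - j in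
  let f := fun J : {vspace A} => (rann J * I)%VS in
  let g := fun W : {vspace A} => lann (W * fullv)%VS in
  [/\ (forall J, dom J -> cod (f J)),
      (forall W, cod W -> dom (g W)),
      (forall J, dom J -> g (f J) = J)
    & (forall W, cod W -> f (g W) = W)].
Proof.
move=> [_ A_simple dimA] I_left dimI dom cod f g.
have rann_prodI J : (rann J * I)%VS = (rann J :&: I)%VS.
  exact: prod_rannI A_simple dimA I_left dimI J.
rewrite /dom /cod /f /g.
split=> [J [JL IJ dimJ] | W [] | J [JL _ _] | W []]; rewrite ?rann_prodI ?lann_prodvf.
- split; first by rewrite capvS ?rannS.
  exact: dim_rann_capI A_simple dimA I_left dimI J j JL dimJ.
- rewrite subv_cap => /andP[W_rannI WI] dimW.
  split; [exact: lann_left_ideal | by rewrite sub_lann |].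
  exact: dim_lannI_eq0 A_simple dimA I_left dimI W j WI dimW.
- exact: left_ideal_lann A_simple dimA I_left dimI J JL.
- rewrite subv_cap => /andP[_ WI] _.
  exact: rann_lann_capI A_simple dimA I_left dimI W WI.
Qed.
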